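(* Let $A$ be a commutative ring. There is a well-defined group homomorphism $\alpha:\mathrm{St}(2,A)\to C(A)$ with $\alpha(x_{21}(a))=y(a)$ and $\alpha(x_{12}(a))=\bar y(a)$ for all $a\in A$. Furthermore $\psi\circ\alpha=\phi$.
   Context: $C(A)$ is the group with generators $\epsilon(a)$, $a\in A$, and relations: with $h(u):=\epsilon(-u)\epsilon(-u^{-1})\epsilon(-u)$, (1) $h(u)h(v)=h(uv)$ ($u,v\in A^\times$); (2) $\epsilon(a)\epsilon(0)\epsilon(b)=h(-1)\epsilon(a+b)$; (3) $h(u)\epsilon(a)h(u)=\epsilon(u^2a)$. $y(a):=\epsilon(0)^3\epsilon(a)$ and $\bar y(a):=\epsilon(-a)\epsilon(0)^3$. $\psi:C(A)\to\mathrm{SL}_2(A)$ sends $\epsilon(a)\mapsto\begin{pmatrix}a&1\\-1&0\end{pmatrix}$. $\mathrm{St}(2,A)$ is the group generated by $x_{12}(t),x_{21}(t)$, $t\in A$, with relations $x_{ij}(s)x_{ij}(t)=x_{ij}(s+t)$ and $w_{ij}(u)x_{ij}(t)w_{ij}(-u)=x_{ji}(-u^{-2}t)$ for $u\in A^\times$, where $w_{ij}(u)=x_{ij}(u)x_{ji}(-u^{-1})x_{ij}(u)$. $\phi:\mathrm{St}(2,A)\to\mathrm{SL}_2(A)$ sends $x_{12}(t)\mapsto\begin{pmatrix}1&t\\0&1\end{pmatrix}$ and $x_{21}(t)\mapsto\begin{pmatrix}1&0\\t&1\end{pmatrix}$. *)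

(* Groups given by presentations are modelled as setoids:
   words in the generators and their formal inverses, modulo the congruence
   generated by free cancellation and the defining relations. *)
From mathcomp Require Import all_boot all_algebra.
Set Implicit Arguments. Unset Strict Implicit. Unset Printing Implicit Defensive.
Import GRing.Theory.
Local Open Scope ring_scope.

(* a letter (b, x): x if b = false, x^{-1} if b = true *)
Definition letter (X : Type) := (bool * X)%type.
Definition word (X : Type) := seq (letter X).
Definition flip (X : Type) (l : letter X) : letter X := (~~ l.1, l.2).
Definition gen (X : Type) (x : X) : word X := [:: (false, x)].

Inductive pres_eq (X : Type) (R : word X -> word X -> Prop) : word X -> word X -> Prop :=
| pe_refl w : pres_eq R w w
| pe_sym w1 w2 : pres_eq R w1 w2 -> pres_eq R w2 w1
| pe_trans w1 w2 w3 : pres_eq R w1 w2 -> pres_eq R w2 w3 -> pres_eq R w1 w3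
| pe_cancel u v l : pres_eq R (u ++ l :: flip l :: v) (u ++ v)
| pe_rel u v l r : R l r -> pres_eq R (u ++ l ++ v) (u ++ r ++ v).

(* f : words -> words induces a well-defined group homomorphism <X|RX> -> <Y|RY> *)
Definition is_pres_hom (X Y : Type) (RX : word X -> word X -> Prop)
  (RY : word Y -> word Y -> Prop) (f : word X -> word Y) : Prop :=
  (forall w1 w2, pres_eq RX w1 w2 -> pres_eq RY (f w1) (f w2)) /\
  (forall w1 w2, pres_eq RY (f (w1 ++ w2)) (f w1 ++ f w2)).

Definition mx_eval (A : comUnitRingType) (X : Type) (g : X -> 'M[A]_2) (w : word X)
  : 'M[A]_2 :=
  foldr (fun l acc => (if l.1 then (g l.2)^-1 else g l.2) * acc) 1 w.

Definition mx2 (A : comUnitRingType) (a b c d : A) : 'M[A]_2 :=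
  \matrix_(i < 2, j < 2)
    if val i == 0%N then (if val j == 0%N then a else b)
    else (if val j == 0%N then c else d).

Section CA.
Variable A : comUnitRingType.

Definition hw (u : A) : word A := gen (- u) ++ gen (- u^-1) ++ gen (- u).

Inductive C_rel : word A -> word A -> Prop :=
| C_rel1 u v : u \is a GRing.unit -> v \is a GRing.unit ->
    C_rel (hw u ++ hw v) (hw (u * v))
| C_rel2 a b : C_rel (gen a ++ gen 0 ++ gen b) (hw (-1) ++ gen (a + b))
| C_rel3 u a : u \is a GRing.unit ->
    C_rel (hw u ++ gen a ++ hw u) (gen (u ^+ 2 * a)).

Definition y (a : A) : word A := gen 0 ++ gen 0 ++ gen 0 ++ gen a.
Definition ybar (a : A) : word A := gen (- a) ++ gen 0 ++ gen 0 ++ gen 0.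

Definition psi_gen (a : A) : 'M[A]_2 := mx2 a 1 (-1) 0.

Inductive stgen : Type := x12 of A | x21 of A.

Definition w12 (u : A) : word stgen :=
  gen (x12 u) ++ gen (x21 (- u^-1)) ++ gen (x12 u).
Definition w21 (u : A) : word stgen :=
  gen (x21 u) ++ gen (x12 (- u^-1)) ++ gen (x21 u).

Inductive St_rel : word stgen -> word stgen -> Prop :=
| St_add12 s t : St_rel (gen (x12 s) ++ gen (x12 t)) (gen (x12 (s + t)))
| St_add21 s t : St_rel (gen (x21 s) ++ gen (x21 t)) (gen (x21 (s + t)))
| St_w12 u t : u \is a GRing.unit ->
    St_rel (w12 u ++ gen (x12 t) ++ w12 (- u)) (gen (x21 (- (u^-1) ^+ 2 * t)))
| St_w21 u t : u \is a GRing.unit ->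
    St_rel (w21 u ++ gen (x21 t) ++ w21 (- u)) (gen (x12 (- (u^-1) ^+ 2 * t))).

Definition phi_gen (g : stgen) : 'M[A]_2 :=
  match g with
  | x12 t => mx2 1 t 0 1
  | x21 t => mx2 1 0 t 1
  end.

End CA.

(* Sending x21(a) to y(a) = eps(0)^3 eps(a) and x12(a) to ybar(a) = eps(-a) eps(0)^3
   extends to words; it remains to check the four Steinberg relations in C(A).
   There c := h(-1) is a central involution and eps(0)^2 = c, so relation (2)
   gives y(s) y(t) = y(s+t) and ybar(s) ybar(t) = ybar(s+t).  The images of the
   Weyl elements collapse to w12(u) |-> h(u) eps(0) and w21(u) |-> eps(0)^3 h(u),
   and conjugating by them reduces, through eps(0) h(u) = h(u^-1) eps(0), to
   relation (3) for u^-1.  Finally psi maps y(a), ybar(a) to the elementary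
   matrices, which is a 2x2 matrix computation. *)
From mathcomp Require Import all_boot all_algebra ring.
From Stdlib Require Import Setoid Morphisms RelationClasses.
Set Implicit Arguments. Unset Strict Implicit. Unset Printing Implicit Defensive.
Import GRing.Theory.
Local Open Scope ring_scope.

#[local] Hint Resolve pe_refl : core.

Section WordInverse.
Variable X : Type.

Definition winv (w : word X) : word X := rev (map (@flip X) w).

Lemma flipK (l : letter X) : flip (flip l) = l.
Proof. by case: l => b x; rewrite /flip /= negbK. Qed.

Lemma winv_cons l w : winv (l :: w) = winv w ++ [:: flip l].
Proof. by rewrite /winv /= rev_cons cats1. Qed.

End WordInverse.

Section PresentedGroups.
Variables (X : Type) (R : word X -> word X -> Prop).
Local Notation peq := (pres_eq R).

#[global] Instance pres_eq_Equivalence : Equivalence peq.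
Proof. split; [exact: pe_refl | exact: pe_sym | exact: pe_trans]. Qed.

Lemma pres_eq_ctx u v w1 w2 : peq w1 w2 -> peq (u ++ w1 ++ v) (u ++ w2 ++ v).
Proof.
elim=> {w1 w2} [w|w1 w2 _ IH|w1 w2 w3 _ IH1 _ IH2|u' v' l|u' v' l r Hlr].
- exact: pe_refl.
- exact: pe_sym.
- exact: pe_trans IH2.
- by have := pe_cancel R (u ++ u') (v' ++ v) l; rewrite -!catA.
- by have := pe_rel (u ++ u') (v' ++ v) Hlr; rewrite -!catA.
Qed.

#[global] Instance cat_pres_eq_Proper : Proper (peq ==> peq ==> peq) (@cat (letter X)).
Proof.
move=> w1 w2 H12 v1 v2 Hv12; transitivity (w2 ++ v1).
  by have := pres_eq_ctx [::] v1 H12.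
by have := pres_eq_ctx w2 [::] Hv12; rewrite !cats0.
Qed.

Lemma pres_eq_rel l r : R l r -> peq l r.
Proof. by move=> Hlr; have := pe_rel [::] [::] Hlr; rewrite !cats0. Qed.

Lemma catwV w : peq (w ++ winv w) [::].
Proof.
elim: w => [|l w IH]; first exact: pe_refl.
rewrite winv_cons -cat1s -!catA (catA w) IH.
exact: (pe_cancel R [::] [::] l).
Qed.

Lemma catVw w : peq (winv w ++ w) [::].
Proof.
elim: w => [|l w IH]; first exact: pe_refl.
rewrite winv_cons -catA /=.
by have := pe_cancel R (winv w) w (flip l); rewrite flipK => ->.
Qed.

Lemma pres_eq_catlI u v v' : peq (u ++ v) (u ++ v') -> peq v v'.
Proof.
move=> Huv; transitivity ((winv u ++ u) ++ v); first by rewrite catVw.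
by rewrite -catA Huv catA catVw.
Qed.

End PresentedGroups.

Section WordExtension.
Variables (X Y : Type) (RX : word X -> word X -> Prop) (RY : word Y -> word Y -> Prop).
Variable f : X -> word Y.

Definition word_ext (w : word X) : word Y :=
  flatten [seq if l.1 then winv (f l.2) else f l.2 | l <- w].

Lemma word_ext_cat u v : word_ext (u ++ v) = word_ext u ++ word_ext v.
Proof. by rewrite /word_ext map_cat flatten_cat. Qed.

Lemma word_ext_gen x : word_ext (gen x) = f x.
Proof. exact: cats0. Qed.

Lemma pres_hom_word_ext :
  (forall l r, RX l r -> pres_eq RY (word_ext l) (word_ext r)) ->
  is_pres_hom RX RY word_ext.
Proof.
move=> f_rel; split=> [w1 w2|w1 w2]; last by rewrite word_ext_cat.
elim=> {w1 w2} [w|w1 w2 _ IH|w1 w2 w3 _ IH1 _ IH2|u v [[] x]|u v l r Hlr].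
- exact: pe_refl.
- exact: pe_sym.
- exact: pe_trans IH2.
- rewrite !word_ext_cat.
  change (pres_eq RY (word_ext u ++ (winv (f x) ++ f x ++ word_ext v))
                     (word_ext u ++ word_ext v)).
  by rewrite (catA (winv (f x))) catVw.
- rewrite !word_ext_cat.
  change (pres_eq RY (word_ext u ++ (f x ++ winv (f x) ++ word_ext v))
                     (word_ext u ++ word_ext v)).
  by rewrite (catA (f x)) catwV.
- by rewrite !word_ext_cat (f_rel _ _ Hlr).
Qed.

End WordExtension.

Section MatrixEvaluation.
Variable A : comUnitRingType.

Lemma mx_eval_cat (X : Type) (g : X -> 'M[A]_2) u v :
  mx_eval g (u ++ v) = mx_eval g u * mx_eval g v.
Proof. by elim: u => [|l u IH] /=; rewrite ?mul1r // IH mulrA. Qed.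

Section UnitGenerators.
Variables (X : Type) (g : X -> 'M[A]_2).
Hypothesis g_unit : forall x, g x \is a GRing.unit.

Lemma mx_eval_letter_unit (l : letter X) :
  (if l.1 then (g l.2)^-1 else g l.2) \is a GRing.unit.
Proof. by case: ifP => _; rewrite ?unitrV g_unit. Qed.

Lemma mx_eval_unit w : mx_eval g w \is a GRing.unit.
Proof.
elim: w => [|l w IH] /=; first exact: unitr1.
by rewrite unitrMr // mx_eval_letter_unit.
Qed.

Lemma mx_eval_winv w : mx_eval g (winv w) = (mx_eval g w)^-1.
Proof.
elim: w => [|l w IH]; first by rewrite /= invr1.
rewrite winv_cons mx_eval_cat IH /= mulr1 invrM ?mx_eval_unit ?mx_eval_letter_unit //.
by case: l => [[] x] /=; rewrite ?invrK.
Qed.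

End UnitGenerators.

Lemma mx_eval_word_ext (X Y : Type) (h : Y -> 'M[A]_2) (g : X -> 'M[A]_2)
    (f : X -> word Y) :
  (forall y, h y \is a GRing.unit) -> (forall x, mx_eval h (f x) = g x) ->
  forall w, mx_eval h (word_ext f w) = mx_eval g w.
Proof.
move=> h_unit hfg; elim=> [|[b x] w IH] //.
rewrite -cat1s word_ext_cat (mx_eval_cat h) (mx_eval_cat g) IH; congr (_ * _).
by rewrite /word_ext /= cats0 mulr1; case: b => /=; rewrite ?(mx_eval_winv h_unit) hfg.
Qed.

End MatrixEvaluation.

Section Matrices.
Variable A : comUnitRingType.

Lemma mx2_mul (a b c d a' b' c' d' : A) :
  mx2 a b c d * mx2 a' b' c' d' =
  mx2 (a * a' + b * c') (a * b' + b * d') (c * a' + d * c') (c * b' + d * d').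
Proof.
rewrite -mulmxE; apply/matrixP => i j; rewrite !mxE !big_ord_recr big_ord0 /= !mxE /=.
by case: i => [[|[|i]]] Hi; case: j => [[|[|j]]] Hj //=; rewrite add0r.
Qed.

Lemma mx2_1 : (1 : 'M[A]_2) = mx2 1 0 0 1.
Proof.
apply/matrixP => i j; rewrite !mxE /=.
by case: i => [[|[|i]]] Hi; case: j => [[|[|j]]] Hj.
Qed.

Lemma psi_gen_unit (a : A) : psi_gen a \is a GRing.unit.
Proof.
apply/unitrP; exists (mx2 0 (-1) 1 a); rewrite /psi_gen !mx2_mul mx2_1.
by split; congr mx2; ring.
Qed.

Lemma mx_eval_psi_y (a : A) : mx_eval (@psi_gen A) (y a) = mx2 1 0 a 1.
Proof. by rewrite /y /mx_eval /= mulr1 /psi_gen !mx2_mul; congr mx2; ring. Qed.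

Lemma mx_eval_psi_ybar (a : A) : mx_eval (@psi_gen A) (ybar a) = mx2 1 a 0 1.
Proof. by rewrite /ybar /mx_eval /= mulr1 /psi_gen !mx2_mul; congr mx2; ring. Qed.

End Matrices.

Section GroupC.
Variable A : comUnitRingType.
Local Notation ceq := (pres_eq (@C_rel A)).
Local Notation z := (gen (0 : A)).
Local Notation c := (hw (-1 : A)).

(* Identities carry an arbitrary tail [w] so that they rewrite inside
   right-nested words.  Words are re-associated with the [_catE] equations
   below rather than with [catA], whose matching would unfold [hw], [y] and
   [ybar]. *)

Lemma hw1 : ceq (hw 1) [::].
Proof.
have := pres_eq_rel (C_rel1 (@unitr1 A) (@unitr1 A)); rewrite mulr1 => h11.
by apply: (@pres_eq_catlI _ _ (hw 1)); rewrite cats0.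
Qed.

Lemma hwN1K w : ceq (c ++ c ++ w) w.
Proof.
have := pres_eq_rel (C_rel1 (@unitrN1 A) (@unitrN1 A)).
by rewrite mulrNN mulr1 hw1 catA => ->.
Qed.

Lemma hwN1_gen a w : ceq (c ++ gen a ++ w) (gen a ++ c ++ w).
Proof.
have := pres_eq_rel (C_rel3 a (@unitrN1 A)); rewrite sqrrN expr1n mul1r => cac.
transitivity (c ++ gen a ++ c ++ c ++ w); first by rewrite hwN1K.
by rewrite (catA (gen a)) catA cac.
Qed.

Lemma hwN1_hw u w : ceq (c ++ hw u ++ w) (hw u ++ c ++ w).
Proof.
rewrite -[hw u]/(gen (- u) ++ gen (- u^-1) ++ gen (- u)).
by rewrite -(catA (gen (- u))) -(catA (gen (- u^-1))) !hwN1_gen.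
Qed.

Lemma gen0_sqr w : ceq (z ++ z ++ w) (c ++ w).
Proof.
have := pres_eq_rel (C_rel2 (0 : A) 0); rewrite addr0 => zzz.
transitivity (z ++ z ++ z ++ winv z ++ w); first by rewrite (catA z (winv z)) catwV.
by rewrite (catA z z (winv z ++ w)) (catA z (z ++ z)) zzz -catA (catA z) catwV.
Qed.

Lemma gen_gen0_gen a b w : ceq (gen a ++ z ++ gen b ++ w) (c ++ gen (a + b) ++ w).
Proof.
by rewrite (catA z (gen b) w) (catA (gen a)) (pres_eq_rel (C_rel2 a b)) -catA.
Qed.

Lemma hw_gen_hw u a w : u \is a GRing.unit ->
  ceq (hw u ++ gen a ++ hw u ++ w) (gen (u ^+ 2 * a) ++ w).
Proof.
move=> U.
by rewrite (catA (gen a) (hw u) w) (catA (hw u) (gen a ++ hw u)) (pres_eq_rel (C_rel3 a U)).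
Qed.

Lemma hw_hwV u w : u \is a GRing.unit -> ceq (hw u ++ hw u^-1 ++ w) w.
Proof.
move=> U; have Uv : u^-1 \is a GRing.unit by rewrite unitrV.
have := pres_eq_rel (C_rel1 U Uv).
by rewrite mulrV // hw1 catA => ->.
Qed.

Lemma hwV_hw u w : u \is a GRing.unit -> ceq (hw u^-1 ++ hw u ++ w) w.
Proof.
by move=> U; have := @hw_hwV u^-1 w; rewrite unitrV invrK => /(_ U).
Qed.

Lemma hwN u w : u \is a GRing.unit -> ceq (hw (- u) ++ w) (c ++ hw u ++ w).
Proof.
move=> U; have := pres_eq_rel (C_rel1 (@unitrN1 A) U).
by rewrite mulN1r catA => ->.
Qed.

Lemma gen0_hw u w : u \is a GRing.unit -> ceq (z ++ hw u ++ w) (hw u^-1 ++ z ++ w).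
Proof.
move=> U; transitivity (hw u^-1 ++ hw u ++ z ++ hw u ++ w); first by rewrite hwV_hw.
by rewrite hw_gen_hw // mulr0.
Qed.

Lemma hw_gen0 u w : u \is a GRing.unit -> ceq (hw u ++ z ++ w) (z ++ hw u^-1 ++ w).
Proof.
move=> U; transitivity (hw u ++ z ++ hw u ++ hw u^-1 ++ w); first by rewrite hw_hwV.
by rewrite hw_gen_hw // mulr0.
Qed.

Lemma hw_catE (u : A) w : gen (- u) ++ gen (- u^-1) ++ gen (- u) ++ w = hw u ++ w.
Proof. by rewrite /hw -!catA. Qed.

Lemma hwN_catE (u : A) w : gen u ++ gen u^-1 ++ gen u ++ w = hw (- u) ++ w.
Proof. by rewrite -hw_catE invrN !opprK. Qed.

Lemma y_catE (a : A) w : y a ++ w = z ++ z ++ z ++ gen a ++ w.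
Proof. by rewrite /y -!catA. Qed.

Lemma ybar_catE (a : A) w : ybar a ++ w = gen (- a) ++ z ++ z ++ z ++ w.
Proof. by rewrite /ybar -!catA. Qed.

Lemma gen_gen0_cube_gen a b w : ceq (gen a ++ z ++ z ++ z ++ gen b ++ w) (gen (a + b) ++ w).
Proof. by rewrite gen0_sqr -hwN1_gen gen_gen0_gen hwN1K. Qed.

Lemma ybarD s t w : ceq (ybar s ++ ybar t ++ w) (ybar (s + t) ++ w).
Proof. by rewrite !ybar_catE gen_gen0_cube_gen opprD. Qed.

Lemma yD s t w : ceq (y s ++ y t ++ w) (y (s + t) ++ w).
Proof. by rewrite !y_catE gen_gen0_cube_gen. Qed.

Lemma ybar_y_ybar u w : u \is a GRing.unit ->
  ceq (ybar u ++ y (- u^-1) ++ ybar u ++ w) (hw u ++ z ++ w).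
Proof.
move=> U; rewrite ybar_catE y_catE ybar_catE.
by rewrite !gen0_sqr hwN1K -hwN1_gen hw_catE hwN1_hw hwN1K.
Qed.

Lemma y_ybar_y u w : u \is a GRing.unit ->
  ceq (y u ++ ybar (- u^-1) ++ y u ++ w) (z ++ z ++ z ++ hw u ++ w).
Proof.
move=> U; rewrite y_catE ybar_catE y_catE opprK.
have hw_word : ceq (gen u ++ gen u^-1 ++ z ++ z ++ z ++ z ++ z ++ z ++ gen u ++ w) (hw u ++ w).
  by rewrite !gen0_sqr hwN1K -!hwN1_gen (hwN_catE u) (hwN _ U) hwN1K.
by rewrite hw_word.
Qed.

Lemma hw_gen0_ybar u t w : u \is a GRing.unit ->
  ceq (hw u ++ z ++ ybar t ++ hw (- u) ++ z ++ w) (y (- (u^-1) ^+ 2 * t) ++ w).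
Proof.
move=> U; have Uv : u^-1 \is a GRing.unit by rewrite unitrV.
rewrite ybar_catE y_catE (hwN _ U) gen0_sqr hwN1_gen hwN1K (hw_gen0 _ U) (gen0_hw _ U).
by rewrite (hw_gen_hw _ _ Uv) gen0_sqr -hwN1_gen -gen0_sqr mulrN mulNr.
Qed.

Lemma gen0_cube_hw_y u t w : u \is a GRing.unit ->
  ceq (z ++ z ++ z ++ hw u ++ y t ++ z ++ z ++ z ++ hw (- u) ++ w)
      (ybar (- (u^-1) ^+ 2 * t) ++ w).
Proof.
move=> U; have Uv : u^-1 \is a GRing.unit by rewrite unitrV.
rewrite y_catE ybar_catE (hwN _ U) gen0_sqr (gen0_hw _ U) gen0_sqr gen0_sqr hwN1K gen0_sqr.
rewrite hwN1_gen hwN1K (gen0_hw _ U) (hw_gen_hw _ _ Uv) hwN1_gen -gen0_sqr.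
by rewrite mulNr opprK.
Qed.

End GroupC.

Section Alpha.
Variable A : comUnitRingType.
Local Notation ceq := (pres_eq (@C_rel A)).
Local Notation z := (gen (0 : A)).

Definition alpha_gen (g : stgen A) : word A :=
  match g with x12 a => ybar a | x21 a => y a end.
Local Notation alpha := (word_ext alpha_gen).

Lemma alpha_x12 a : alpha (gen (x12 a)) = ybar a.
Proof. exact: word_ext_gen. Qed.

Lemma alpha_x21 a : alpha (gen (x21 a)) = y a.
Proof. exact: word_ext_gen. Qed.

Lemma alpha_w12 u w : u \is a GRing.unit -> ceq (alpha (w12 u) ++ w) (hw u ++ z ++ w).
Proof.
move=> U; rewrite /w12 2!word_ext_cat alpha_x12 alpha_x21 -(catA (ybar u)) -(catA (y _)).
exact: ybar_y_ybar.
Qed.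

Lemma alpha_w21 u w : u \is a GRing.unit ->
  ceq (alpha (w21 u) ++ w) (z ++ z ++ z ++ hw u ++ w).
Proof.
move=> U; rewrite /w21 2!word_ext_cat alpha_x12 alpha_x21 -(catA (y u)) -(catA (ybar _)).
exact: y_ybar_y.
Qed.

Lemma alpha_St_rel l r : St_rel l r -> ceq (alpha l) (alpha r).
Proof.
case=> [s t|s t|u t U|u t U].
- by rewrite word_ext_cat !alpha_x12 -[ybar t]cats0 ybarD cats0.
- by rewrite word_ext_cat !alpha_x21 -[y t]cats0 yD cats0.
- have UN : - u \is a GRing.unit by rewrite unitrN.
  rewrite 2!word_ext_cat alpha_x12 alpha_x21 (alpha_w12 _ U) -[alpha (w12 (- u))]cats0.
  by rewrite (alpha_w12 _ UN) hw_gen0_ybar // cats0.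
- have UN : - u \is a GRing.unit by rewrite unitrN.
  rewrite 2!word_ext_cat alpha_x12 alpha_x21 (alpha_w21 _ U) -[alpha (w21 (- u))]cats0.
  by rewrite (alpha_w21 _ UN) gen0_cube_hw_y // cats0.
Qed.

Lemma mx_eval_psi_alpha_gen g : mx_eval (@psi_gen A) (alpha_gen g) = phi_gen g.
Proof. by case: g => a; [exact: mx_eval_psi_ybar | exact: mx_eval_psi_y]. Qed.

End Alpha.

Theorem propositionA10 (A : comUnitRingType) :
  exists alpha : word (stgen A) -> word A,
    is_pres_hom (@St_rel A) (@C_rel A) alpha /\
    (forall a : A, pres_eq (@C_rel A) (alpha (gen (x21 a))) (y a)) /\
    (forall a : A, pres_eq (@C_rel A) (alpha (gen (x12 a))) (ybar a)) /\
    (forall w : word (stgen A),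
        mx_eval (@psi_gen A) (alpha w) = mx_eval (@phi_gen A) w).
Proof.
exists (word_ext (@alpha_gen A)); split; [|split; [|split]].
- exact/pres_hom_word_ext/alpha_St_rel.
- by move=> a; rewrite alpha_x21.
- by move=> a; rewrite alpha_x12.
- exact: mx_eval_word_ext (@psi_gen_unit A) (@mx_eval_psi_alpha_gen A).
Qed.
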